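(* Let $\mu\ge1$. The language of pairs $(A,B)$ of sequences in $\{0,\dots,\mu\}^\omega$ (read synchronously as words over $\{0,\dots,\mu\}^2$) with $\mathrm{PLA}(A)\ge\mathrm{PLA}(B)$ is $\omega$-context-free, i.e. it is accepted by a B\''uchi pushdown automaton.
   Context: $\mathrm{Sum}(M[0,n-1])=\sum_{j=0}^{n-1}M[j]$. Prefix-average comparison: $\mathrm{PLA}(A)\ge\mathrm{PLA}(B)$ holds iff there are only finitely many indices $i$ with $\mathrm{Sum}(B[0,i-1])\ge\mathrm{Sum}(A[0,i-1])$ and infinitely many indices $i$ with $\mathrm{Sum}(A[0,i-1])>\mathrm{Sum}(B[0,i-1])$. A B\''uchi pushdown automaton is a finite-state automaton with a stack (finite stack alphabet, start symbol, transitions possibly on $\epsilon$ that read the top stack symbol and replace it), accepting an infinite word iff some run visits an accepting state infinitely often. *)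

From mathcomp Require Import all_boot.
Set Implicit Arguments. Unset Strict Implicit. Unset Printing Implicit Defensive.

Definition Sum (mu : nat) (M : nat -> 'I_mu.+1) (i : nat) : nat :=
  \sum_(j < i) (M j : nat).

Definition PLA_ge (mu : nat) (A B : nat -> 'I_mu.+1) : Prop :=
  (exists N, forall i, N <= i -> ~ (Sum A i <= Sum B i)) /\
  (forall N, exists i, N <= i /\ Sum B i < Sum A i).

(* A transition (p, a, X, p', gamma): in state p, reading a (a letter, or
   epsilon when a = None), with X on top of the stack, go to p' and replace
   X by the word gamma (head of gamma = new top). *)
Record BPDA (Sigma : finType) := {
  pda_state : finType;
  pda_stack : finType;
  pda_init : pda_state;
  pda_bottom : pda_stack;
  pda_trans : seq (pda_state * option Sigma * pda_stack * pda_state * seq pda_stack);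
  pda_final : {set pda_state}
}.

Definition pda_step (Sigma : finType) (P : BPDA Sigma) (w : nat -> Sigma)
  (c : pda_state P * seq (pda_stack P)) (pos : nat)
  (c' : pda_state P * seq (pda_stack P)) (pos' : nat) : Prop :=
  exists p a X p' gamma s,
    (p, a, X, p', gamma) \in pda_trans P /\
    c = (p, X :: s) /\ c' = (p', gamma ++ s) /\
    match a with
    | None => pos' = pos
    | Some b => w pos = b /\ pos' = pos.+1
    end.

Arguments pda_step {Sigma} P w c pos c' pos'.
Definition pda_run (Sigma : finType) (P : BPDA Sigma) (w : nat -> Sigma)
  (c : nat -> pda_state P * seq (pda_stack P)) (pos : nat -> nat) : Prop :=
  c 0 = (pda_init P, [:: pda_bottom P]) /\ pos 0 = 0 /\
  (forall i, pda_step P w (c i) (pos i) (c i.+1) (pos i.+1)) /\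
  (forall n, exists i, n <= pos i).

Arguments pda_run {Sigma} P w c pos.

Definition pda_accepts (Sigma : finType) (P : BPDA Sigma) (w : nat -> Sigma) : Prop :=
  exists c pos, pda_run P w c pos /\
    (forall N, exists i, N <= i /\ (c i).1 \in pda_final P).
Arguments pda_accepts {Sigma} P w.

From mathcomp Require Import all_boot zify.
Set Implicit Arguments. Unset Strict Implicit. Unset Printing Implicit Defensive.

(* PLA(A) >= PLA(B) holds iff Sum A i > Sum B i for all large i
   (the "infinitely often" clause is then automatic).  A Buchi pushdown
   automaton reading the pairs (A i, B i) keeps the signed difference
   Sum A i - Sum B i as a sign bit s and a magnitude m = (mu+1) h + r: the
   low digit r < mu+1 lives in the finite state, the high part h is kept in
   unary as h copies of a stack symbol above the bottom symbol.  Each input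
   letter changes the magnitude by at most mu, so one push or pop suffices.
   A further mode bit is switched on nondeterministically, may only be on
   while the difference is positive and never switches off; accepting states
   are those with the mode on.
   The construction works for every mu. *)

Lemma SumS mu (A : nat -> 'I_mu.+1) i : Sum A i.+1 = Sum A i + A i.
Proof. by rewrite /Sum big_ord_recr. Qed.

Lemma PLA_ge_eventually mu (A B : nat -> 'I_mu.+1) :
  PLA_ge A B <-> exists N, forall i, N <= i -> Sum B i < Sum A i.
Proof.
split=> [[[N HN] _] | [N HN]].
  by exists N => i /HN; rewrite ltnNge => /negP.
split; first by exists N => i /HN; rewrite ltnNge => /negP.
by move=> M; exists (maxn M N); rewrite leq_maxl HN // leq_maxr.
Qed.

Section Automaton.
Variable mu : nat.

(* The difference counter: [encodes s m SA SB] says that the signed value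
   (s, m) stands for SA - SB, with s = true meaning SA - SB = m + 1 > 0 and
   s = false meaning SB - SA = m >= 0. *)
Definition encodes (s : bool) (m SA SB : nat) : Prop :=
  if s then SA = SB + m + 1 else SB = SA + m.

Lemma encodes_sign s m SA SB : encodes s m SA SB -> s = (SB < SA).
Proof. by rewrite /encodes; case: s => ->; lia. Qed.

Definition stack_of (h : nat) : seq bool := nseq h true ++ [:: false].

(* One counter update on reading the letter (a, b): given the sign s, the low
   digit r and whether the high part is nonzero (the stack top X), return the
   new sign, the new low digit and the word replacing the stack top. *)
Definition diff_update (s : bool) (r : nat) (X : bool) (a b : nat)
    : bool * nat * seq bool :=
  let grows := if s then b <= a else a <= b in
  let e := (a - b) + (b - a) in
  if grows then
    if r + e < mu.+1 then (s, r + e, [:: X])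
    else (s, r + e - mu.+1, [:: true; X])
  else if e <= r then (s, r - e, [:: X])
  else if X then (s, r + mu.+1 - e, [::])
  else (~~ s, e - 1 - r, [:: X]).

Lemma diff_update_spec s r h a b SA SB :
  r < mu.+1 -> a < mu.+1 -> b < mu.+1 -> encodes s (mu.+1 * h + r) SA SB ->
  let: (s', r', g) := diff_update s r (0 < h) a b in
  r' < mu.+1 /\ exists h', g ++ behead (stack_of h) = stack_of h' /\
    encodes s' (mu.+1 * h' + r') (SA + a) (SB + b).
Proof.
move=> Hr Ha Hb; rewrite /diff_update /encodes /stack_of.
case: s; case: h => [|h] E /=; repeat case: ifP => ? /=;
  (split; first lia);
  first [ exists 0; split; [done | lia]
        | exists 1; split; [done | rewrite ?mulnS ?muln0 in E *; lia]
        | exists h; split; [done | rewrite ?mulnS ?muln0 in E *; lia]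
        | exists h.+1; split; [done | rewrite ?mulnS ?muln0 in E *; lia]
        | exists h.+2; split; [done | rewrite ?mulnS ?muln0 in E *; lia] ].
Qed.

(* States are triples (mode, sign, low digit); letters are pairs of digits. *)
Definition state := (bool * bool * 'I_mu.+1)%type.
Definition letter := ('I_mu.+1 * 'I_mu.+1)%type.

Definition mode (p : state) : bool := p.1.1.
Definition sign (p : state) : bool := p.1.2.

Definition move (md' : bool) (p : state) (X : bool) (l : letter)
    : state * seq bool :=
  let u := diff_update (sign p) p.2 X l.1 l.2 in
  ((md', u.1.1, inord u.1.2), u.2).

Definition allowed (p : state) (X : bool) (l : letter) (md' : bool) : bool :=
  (mode p ==> md') && (md' ==> sign (move md' p X l).1).

Definition transition (t : state * letter * bool * bool) :=
  let: (p, l, X, md') := t in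
  (p, Some l, X, (move md' p X l).1, (move md' p X l).2).

Definition transition_ok (t : state * letter * bool * bool) : bool :=
  let: (p, l, X, md') := t in allowed p X l md'.

Definition PLA_automaton : BPDA letter :=
  {| pda_state := state; pda_stack := bool;
     pda_init := (false, false, ord0); pda_bottom := false;
     pda_trans := [seq transition t | t <- enum {: state * letter * bool * bool}
                                     & transition_ok t];
     pda_final := [set p : state | mode p] |}.

Definition cfg_step (md' : bool) (c : state * seq bool) (l : letter) :=
  let m := move md' c.1 (head false c.2) l in (m.1, m.2 ++ behead c.2).

Lemma pda_stepP (w : nat -> letter) c pos c' pos' :
  pda_step PLA_automaton w c pos c' pos' <->
  c.2 != [::] /\ pos' = pos.+1 /\
  exists2 md', allowed c.1 (head false c.2) (w pos) md' &
               c' = cfg_step md' c (w pos).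
Proof.
split.
  move=> [p [a [X [p' [gamma [st [Hmem [-> [-> Hread]]]]]]]]] /=.
  case/mapP: Hmem => [[[[q l] Y] md']]; rewrite mem_filter => /andP[Hok _].
  case=> -> Ea -> -> ->; move: Hread; rewrite Ea => -[-> ->].
  by do 2!split => //; exists md'.
case: c => p [|X st] [// _ [-> [md' Hok ->]]].
exists p, (Some (w pos)), X, (move md' p X (w pos)).1, (move md' p X (w pos)).2, st.
split => //; apply/mapP; exists (p, w pos, X, md') => //.
by rewrite mem_filter mem_enum andbT.
Qed.

Definition tracks (A B : nat -> 'I_mu.+1) (c : state * seq bool) (i : nat) :=
  exists h, c.2 = stack_of h /\
            encodes (sign c.1) (mu.+1 * h + c.1.2) (Sum A i) (Sum B i).

Lemma tracks0 (A B : nat -> 'I_mu.+1) :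
  tracks A B (pda_init PLA_automaton, [:: pda_bottom PLA_automaton]) 0.
Proof. by exists 0; rewrite /Sum !big_ord0 muln0. Qed.

Lemma tracks_step (A B : nat -> 'I_mu.+1) c i md' :
  tracks A B c i -> tracks A B (cfg_step md' c (A i, B i)) i.+1.
Proof.
case: c => p st [h [/= Hst Henc]].
have Htop : head false st = (0 < h) by rewrite Hst; case: (h).
have := diff_update_spec (ltn_ord p.2) (ltn_ord (A i)) (ltn_ord (B i)) Henc.
rewrite /cfg_step /move /= Htop Hst.
case: diff_update => [[s' r'] g] [Hr' [h' [Hg Henc']]].
by exists h'; rewrite /= Hg inordK // !SumS.
Qed.

Lemma tracks_sign (A B : nat -> 'I_mu.+1) c i :
  tracks A B c i -> sign c.1 = (Sum B i < Sum A i).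
Proof. by case=> h [_ /encodes_sign]. Qed.

Section Soundness.
Variables (A B : nat -> 'I_mu.+1).
Variables (c : nat -> state * seq bool) (pos : nat -> nat).
Hypothesis run : pda_run PLA_automaton (fun i => (A i, B i)) c pos.

Lemma run_tracks i :
  [/\ pos i = i, tracks A B (c i) i & mode (c i).1 ==> sign (c i).1].
Proof.
case: run => Hc0 [Hp0 [Hstep _]].
elim: i => [|i [Hpi Htr _]]; first by rewrite Hc0 Hp0; split=> //; exact: tracks0.
have /pda_stepP [_ [-> [md' /andP[_ Hsign] ->]]] := Hstep i.
by rewrite Hpi in Hsign *; split=> //; exact: tracks_step Htr.
Qed.

Lemma run_mode_mono i j : i <= j -> mode (c i).1 -> mode (c j).1.
Proof.
case: run => _ [_ [Hstep _]].
elim: j => [|j IH]; first by rewrite leqn0 => /eqP->.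
rewrite leq_eqVlt => /orP[/eqP-> // | /IH Hi /Hi Hmj].
have /pda_stepP [_ [_ [md' /andP[Hmono _] ->]]] := Hstep j.
by rewrite /= (implyP Hmono).
Qed.

Lemma accepting_run_eventually :
  (forall N, exists i, N <= i /\ (c i).1 \in pda_final PLA_automaton) ->
  exists N, forall i, N <= i -> Sum B i < Sum A i.
Proof.
case/(_ 0) => i0 [_]; rewrite inE => Hi0; exists i0 => j Hj.
have [_ Htr Hsign] := run_tracks j.
by rewrite -(tracks_sign Htr) (implyP Hsign) // (run_mode_mono Hj).
Qed.

End Soundness.

(* The run that switches the mode on when reading the letter at index N-1. *)
Fixpoint guess_run (A B : nat -> 'I_mu.+1) (N i : nat) : state * seq bool :=
  if i is i'.+1 then cfg_step (N <= i) (guess_run A B N i') (A i', B i')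
  else (pda_init PLA_automaton, [:: pda_bottom PLA_automaton]).

Lemma guess_run_tracks (A B : nat -> 'I_mu.+1) N i :
  tracks A B (guess_run A B N i) i.
Proof. by elim: i => [|i IH]; [exact: tracks0 | exact: tracks_step IH]. Qed.

Lemma guess_run_accepting (A B : nat -> 'I_mu.+1) N :
  0 < N -> (forall i, N <= i -> Sum B i < Sum A i) ->
  pda_accepts PLA_automaton (fun i => (A i, B i)).
Proof.
move=> N0 HN.
have Hmode i : mode (guess_run A B N i).1 = (N <= i).
  by case: i => [|i] //=; rewrite leqNgt N0.
exists (guess_run A B N), id; split.
  split=> //; split=> //; split=> [i|n]; last by exists n.
  have [h [Hst _]] := guess_run_tracks A B N i.
  apply/pda_stepP; split; first by rewrite Hst; case: (h).
  split=> //; exists (N <= i.+1) => //; apply/andP; split.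
    by rewrite Hmode; apply/implyP => /leqW.
  by apply/implyP => /HN; rewrite -(tracks_sign (guess_run_tracks A B N i.+1)).
move=> M; exists (maxn M N); rewrite leq_maxl inE Hmode; split=> //.
exact: leq_maxr.
Qed.

End Automaton.

Theorem theorem20 (mu : nat) (hmu : 1 <= mu) :
  exists P : BPDA ('I_mu.+1 * 'I_mu.+1)%type,
    forall A B : nat -> 'I_mu.+1,
      pda_accepts P (fun i => (A i, B i)) <-> PLA_ge A B.
Proof.
exists (PLA_automaton mu) => A B; rewrite PLA_ge_eventually; split.
  by case=> c [pos [Hrun Hacc]]; exact: accepting_run_eventually Hrun Hacc.
case=> N HN; apply: (@guess_run_accepting _ A B N.+1) => // i Hi.
exact/HN/ltnW.
Qed.
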